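(* For every $M\in\Lambda$, for every term $t$ with $[\![M]\!]\rightarrow^* t$ in $\Phi$, and for every occurrence of a constructor $c_{x,N}$ in $t$, $N$ is a subterm of $M$.
   Context: $\lambda$-terms: $M::=x\mid\lambda x.M\mid MN$, $x$ from a denumerable set $\Upsilon$ of variables with a fixed total order; $\Lambda$ is the set of terms; $FV(M)$ is the ordered sequence of free variables. $\Phi$ is the constructor rewrite system with binary function symbol $\mathbf{app}$ and, for every $M\in\Lambda$, $x\in\Upsilon$, a constructor $c_{x,M}$ of arity the length of $FV(\lambda x.M)$. $[\![x]\!]=x$, $[\![\lambda x.M]\!]=c_{x,M}(x_1,\dots,x_n)$ with $FV(\lambda x.M)=x_1,\dots,x_n$, $[\![MN]\!]=\mathbf{app}([\![M]\!],[\![N]\!])$. Rules: $\mathbf{app}(c_{x,M}(x_1,\dots,x_n),x)\rightarrow[\![M]\!]$ with $FV(\lambda x.M)=x_1,\dots,x_n$. Rewriting is call-by-value: a step replaces anywhere a subterm $l\sigma$ by $r\sigma$, $l\rightarrow r$ a rule, $\sigma$ mapping variables to constructor terms (closed terms built only from constructors). *)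

From Stdlib Require Import List Relations.
From mathcomp Require Import all_boot.

Set Implicit Arguments.
Unset Strict Implicit.

(* Variables: the denumerable set Upsilon, represented by nat with its
   usual total order. *)
Definition var := nat.

Inductive lam : Type :=
| Var : var -> lam
| Lam : var -> lam -> lam
| App : lam -> lam -> lam.

Fixpoint fv_raw (M : lam) : seq var :=
  match M with
  | Var x => [:: x]
  | Lam x M => filter (fun y => y != x) (fv_raw M)
  | App M N => fv_raw M ++ fv_raw N
  end.

Definition FV (M : lam) : seq var := sort leq (undup (fv_raw M)).

Inductive subterm : lam -> lam -> Prop :=
| sub_refl M : subterm M M
| sub_lam N x M : subterm N M -> subterm N (Lam x M)
| sub_appl N M1 M2 : subterm N M1 -> subterm N (App M1 M2)
| sub_appr N M1 M2 : subterm N M2 -> subterm N (App M1 M2).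

(* Terms of the constructor rewrite system Phi: variables, the binary
   function symbol app, and constructors c_{x,M} applied to arguments. *)
Inductive term : Type :=
| TVar : var -> term
| Tapp : term -> term -> term
| TC : var -> lam -> list term -> term.

Definition arity (x : var) (M : lam) : nat := size (FV (Lam x M)).

Inductive ctor_term : term -> Prop :=
| ctor_intro x M args :
    length args = arity x M ->
    Forall ctor_term args -> ctor_term (TC x M args).

Fixpoint tr (M : lam) : term :=
  match M with
  | Var x => TVar x
  | Lam x N => TC x N (map TVar (FV (Lam x N)))
  | App M N => Tapp (tr M) (tr N)
  end.

Fixpoint subst (s : var -> term) (t : term) : term :=
  match t with
  | TVar y => s y
  | Tapp u v => Tapp (subst s u) (subst s v)
  | TC y N args => TC y N (map (subst s) args)
  end.

(* One call-by-value step: the rule  app(c_{x,M}(x1..xn), x) -> [[M]]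
   (FV(\x.M) = x1..xn) instantiated by a substitution mapping variables
   to constructor terms, applied anywhere in the term. *)
Inductive step : term -> term -> Prop :=
| step_root (x : var) (M : lam) (s : var -> term) :
    (forall y, ctor_term (s y)) ->
    step (subst s (Tapp (TC x M (map TVar (FV (Lam x M)))) (TVar x)))
         (subst s (tr M))
| step_appl u u' v : step u u' -> step (Tapp u v) (Tapp u' v)
| step_appr u v v' : step v v' -> step (Tapp u v) (Tapp u v')
| step_arg y N l1 a a' l2 :
    step a a' -> step (TC y N (l1 ++ a :: l2)) (TC y N (l1 ++ a' :: l2)).

Definition steps : term -> term -> Prop := clos_refl_trans term step.

Inductive occurs (x : var) (N : lam) : term -> Prop :=
| occ_here args : occurs x N (TC x N args)
| occ_arg y M args a : In a args -> occurs x N a -> occurs x N (TC y M args)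
| occ_appl u v : occurs x N u -> occurs x N (Tapp u v)
| occ_appr u v : occurs x N v -> occurs x N (Tapp u v).

(* Proof: every constructor c_{y,P} created by a rewrite step comes from a
   right-hand side [[P']] with P a subterm of P', whose own symbol c_{y,P'}
   already occurs in the redex; constructors supplied by the substitution are
   copied from the redex arguments.  Hence the invariant "every constructor
   c_{x,N} of t has N a subterm of M" holds for [[M]] and is preserved by
   each step.  The call-by-value restriction plays no role. *)
From Pilot Require Import Defs.
From Stdlib Require Import List Relations.
From mathcomp Require Import all_boot.
Set Implicit Arguments.
Unset Strict Implicit.

Inductive occurs_var (y : var) : term -> Prop :=
| ov_here : occurs_var y (TVar y)
| ov_appl u v : occurs_var y u -> occurs_var y (Tapp u v)
| ov_appr u v : occurs_var y v -> occurs_var y (Tapp u v)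
| ov_arg z P args a : In a args -> occurs_var y a -> occurs_var y (TC z P args).

Lemma In_mem (T : eqType) (a : T) (s : seq T) : In a s <-> a \in s.
Proof.
elim: s => [|b s IHs] //=; rewrite inE; split.
- by case=> [->|/IHs ->]; rewrite ?eqxx ?orbT.
- by case/orP=> [/eqP ->|/IHs]; [left|right].
Qed.

Lemma mem_FV (y : var) (L : lam) : (y \in FV L) = (y \in fv_raw L).
Proof. by rewrite /FV mem_sort mem_undup. Qed.

Lemma subterm_trans (A B C : lam) : subterm A B -> subterm B C -> subterm A C.
Proof. by move=> + sBC; elim: sBC => // *; eauto using subterm. Qed.

Lemma occurs_subst_var (x : var) (N : lam) (s : var -> term) (y : var) (t : term) :
  occurs_var y t -> occurs x N (s y) -> occurs x N (subst s t).
Proof.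
elim=> [|u v _ IH|u v _ IH|z P args a a_args _ IH] occ_sy /=.
- exact: occ_sy.
- exact/occ_appl/IH.
- exact/occ_appr/IH.
- exact: occ_arg _ _ (in_map _ _ _ a_args) (IH occ_sy).
Qed.

Lemma occurs_substP (x : var) (N : lam) (s : var -> term) (t : term) :
  occurs x N (subst s t) ->
  occurs x N t \/ exists y, occurs_var y t /\ occurs x N (s y).
Proof.
move=> occ; remember (subst s t) as st eqn:Est.
elim: occ t Est => [args|z P args a a_args occ_a IH|u v occ_u IH|u v occ_v IH]
  [y|t1 t2|z' P' l] //= Est;
  try by right; exists y; split; [constructor|rewrite -Est; eauto using occurs].
- by case: Est => -> -> _; left; constructor.
- case: Est => <- <- El; subst args.
  have [b [Eb b_l]] := proj1 (in_map_iff _ _ _) a_args.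
  have [occ_b|[w [w_b occ_w]]] := IH b (esym Eb).
  + by left; exact: occ_arg _ _ b_l occ_b.
  + by right; exists w; split=> //; exact: ov_arg _ _ b_l w_b.
- case: Est => Eu _; have [occ_t1|[w [w_t1 occ_w]]] := IH t1 Eu.
  + by left; exact: occ_appl.
  + by right; exists w; split=> //; exact: ov_appl.
- case: Est => _ Ev; have [occ_t2|[w [w_t2 occ_w]]] := IH t2 Ev.
  + by left; exact: occ_appr.
  + by right; exists w; split=> //; exact: ov_appr.
Qed.

Lemma occurs_tr_subterm (x : var) (N M : lam) : occurs x N (tr M) -> subterm N M.
Proof.
elim: M => [z|z P _|M1 IH1 M2 IH2] /= occ;
  inversion occ as [|? ? ? a a_vars occ_a|? ? occ_M1|? ? occ_M2]; subst.
- by apply: sub_lam; exact: Defs.sub_refl.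
- by have [b [Eb _]] := proj1 (in_map_iff _ _ _) a_vars; subst a; inversion occ_a.
- exact/sub_appl/IH1.
- exact/sub_appr/IH2.
Qed.

Lemma occurs_var_tr (y : var) (M : lam) : occurs_var y (tr M) -> y \in fv_raw M.
Proof.
elim: M => [z|z P _|M1 IH1 M2 IH2] /= occ;
  inversion occ as [|? ? occ_M1|? ? occ_M2|? ? ? a a_vars occ_a]; subst.
- by rewrite inE.
- have [b [Eb b_FV]] := proj1 (in_map_iff _ _ _) a_vars; subst a.
  by inversion occ_a; subst; move/In_mem: b_FV; rewrite mem_FV.
- by rewrite mem_cat IH1.
- by rewrite mem_cat IH2 ?orbT.
Qed.

Lemma occurs_var_lhs (x : var) (M : lam) (y : var) : y \in fv_raw M ->
  occurs_var y (Tapp (TC x M (map TVar (FV (Lam x M)))) (TVar x)).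
Proof.
move=> y_M; case: (eqVneq y x) => [->|y_ne_x]; first exact/ov_appr/ov_here.
apply/ov_appl/(@ov_arg _ _ _ _ (TVar y)); last exact: ov_here.
by apply/in_map/In_mem; rewrite mem_FV /= mem_filter y_ne_x.
Qed.

Lemma occurs_step (u v : term) (x : var) (N : lam) : step u v -> occurs x N v ->
  exists y P, occurs y P u /\ subterm N P.
Proof.
have keep (w : term) : occurs x N w -> exists y P, occurs y P w /\ subterm N P.
  by move=> occ; exists x, N; split=> //; exact: Defs.sub_refl.
elim=> [x0 M0 s _|u1 u1' v1 _ IH|u1 v1 v1' _ IH|y0 N0 l1 a a' l2 _ IH] occ.
- have [occ_M0|[y [y_M0 occ_sy]]] := occurs_substP occ.
  + exists x0, M0; split; last exact: occurs_tr_subterm occ_M0.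
    exact/occ_appl/occ_here.
  + apply/keep/(occurs_subst_var _ occ_sy).
    exact/occurs_var_lhs/(occurs_var_tr y_M0).
- inversion occ as [| |? ? occ_u|? ? occ_v]; subst; last exact/keep/occ_appr.
  by have [y [P [occ_u1 sub]]] := IH occ_u; exists y, P; split; [exact: occ_appl|].
- inversion occ as [| |? ? occ_u|? ? occ_v]; subst; first exact/keep/occ_appl.
  by have [y [P [occ_v1 sub]]] := IH occ_v; exists y, P; split; [exact: occ_appr|].
- inversion occ as [|? ? ? b b_args occ_b| |]; subst; first exact/keep/occ_here.
  have [b_l1|[Eb|b_l2]] := in_app_or _ _ _ b_args.
  + by apply/keep/(occ_arg _ _ _ occ_b)/in_or_app; left.
  + subst b; have [y [P [occ_a sub]]] := IH occ_b; exists y, P; split=> //.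
    by apply/(occ_arg _ _ _ occ_a)/in_or_app; right; left.
  + by apply/keep/(occ_arg _ _ _ occ_b)/in_or_app; right; right.
Qed.

Definition bodies_below (M : lam) (t : term) : Prop :=
  forall x N, occurs x N t -> subterm N M.

Lemma bodies_below_tr (M : lam) : bodies_below M (tr M).
Proof. by move=> x N; exact: occurs_tr_subterm. Qed.

Lemma bodies_below_step (M : lam) (u v : term) :
  step u v -> bodies_below M u -> bodies_below M v.
Proof.
move=> uv below_u x N /(occurs_step uv) [y [P [occ_u sub]]].
exact: subterm_trans sub (below_u y P occ_u).
Qed.

Lemma bodies_below_steps (M : lam) (u v : term) :
  steps u v -> bodies_below M u -> bodies_below M v.
Proof.
elim=> [{}u {}v uv|//|{}u w {}v _ IHuw _ IHwv] below_u.
- exact: bodies_below_step uv below_u.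
- exact: IHwv (IHuw below_u).
Qed.

Theorem proposition1 :
  forall (M : lam) (t : term),
    steps (tr M) t ->
    forall (x : var) (N : lam), occurs x N t -> subterm N M.
Proof.
move=> M t Mt; apply: bodies_below_steps Mt _; exact: bodies_below_tr.
Qed.
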